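(* For $n\ge 3$ let $M^n$ be the $5$-ary $n\times n$ matrix with entries $M^n_{i,i}=0$ for $1\le i\le n$; $M^n_{i,i+1}=1$ for $1\le i\le n-1$; $M^n_{n,1}=1$; $M^n_{i,j}=3$ for $j\ge i+2$; $M^n_{i,1}=4$ for $2\le i\le n-1$; and $M^n_{i,j}=2$ for $2\le j\le i-1$. (For example $M^5$ has rows $(0,1,3,3,3),(4,0,1,3,3),(4,2,0,1,3),(4,2,2,0,1),(1,2,2,2,0)$.) Then $M^n$ is not a weak lonesum matrix, while every proper submatrix of $M^n$ (obtained by deleting at least one row or column) is a weak lonesum matrix.
   Context: A $q$-ary matrix has entries in $\{0,1,\ldots,q-1\}$. For a $q$-ary vector $v=(v_1,\ldots,v_n)$ its structure vector is $(a_0,a_1,\ldots,a_{q-1})$ where $a_k$ is the number of coordinates $i$ with $v_i=k$. A $q$-ary $m\times n$ matrix $M$ is a weak lonesum matrix if no other $q$-ary $m\times n$ matrix has the same structure vectors of all rows and of all columns as $M$. Here $q=5$. *)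

From mathcomp Require Import all_boot all_order all_algebra.
Set Implicit Arguments. Unset Strict Implicit. Unset Printing Implicit Defensive.

Definition row_struct (q m n : nat) (M : 'M['I_q]_(m, n)) (i : 'I_m) (k : 'I_q) : nat :=
  #|[set j : 'I_n | M i j == k]|.

Definition col_struct (q m n : nat) (M : 'M['I_q]_(m, n)) (j : 'I_n) (k : 'I_q) : nat :=
  #|[set i : 'I_m | M i j == k]|.

Definition weak_lonesum (q m n : nat) (M : 'M['I_q]_(m, n)) : Prop :=
  forall N : 'M['I_q]_(m, n),
    (forall i k, row_struct N i k = row_struct M i k) ->
    (forall j k, col_struct N j k = col_struct M j k) ->
    N = M.

Definition submatrix (q m n : nat) (M : 'M['I_q]_(m, n)) (R : {set 'I_m}) (C : {set 'I_n})
  : 'M['I_q]_(#|R|, #|C|) :=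
  \matrix_(i < #|R|, j < #|C|) M (enum_val i) (enum_val j).

(* Entry of M^n at 0-based position (a, b), i.e. 1-based (a+1, b+1). *)
Definition Mentry (n a b : nat) : nat :=
  if a == b then 0
  else if b == a.+1 then 1
  else if a.+2 <= b then 3
  else if b == 0 then (if a == n.-1 then 1 else 4)
  else 2.

Definition Mn (n : nat) : 'M['I_5]_(n, n) :=
  \matrix_(i < n, j < n) (inord (Mentry n i j) : 'I_5).


(* A matrix M is weak lonesum as soon as there are weights f_i(k), g_j(k)
   such that each entry M_ij is the unique maximiser of k |-> f_i(k) + g_j(k):
   the total weight sum_ij f_i(N_ij) + g_j(N_ij) of a matrix N depends only on
   its row and column structure vectors, and M maximises it cell by cell.

   In M^n the 0-entries (the diagonal) and the 1-entries (the cyclic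
   superdiagonal (i, i+1 mod n)) each form a permutation matrix, so exchanging
   the symbols 0 and 1 preserves every structure vector: M^n is not weak
   lonesum.  A proper submatrix misses a row or a column, hence some 1-entry
   (r, r+1 mod n); cutting the cycle there, explicit weights exist. *)
From mathcomp Require Import all_boot all_order all_fingroup all_algebra zify.
Set Implicit Arguments. Unset Strict Implicit. Unset Printing Implicit Defensive.
Import Order.TTheory GRing.Theory Num.Theory.
Local Open Scope ring_scope.

Section Potential.

Variable R : numDomainType.

Lemma sum_by_value q (I : finType) (X : I -> 'I_q) (F : 'I_q -> R) :
  \sum_j F (X j) = \sum_k F k *+ #|[set j | X j == k]|.
Proof.
rewrite (partition_big X predT) //=; apply: eq_bigr => k _.
rewrite (eq_bigr (fun _ => F k)); last by move=> j /eqP ->.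
by rewrite -sumr_const; apply: eq_bigl => j; rewrite inE.
Qed.

Lemma weight_by_struct q m n (M : 'M['I_q]_(m, n))
    (f : 'I_m -> 'I_q -> R) (g : 'I_n -> 'I_q -> R) :
  \sum_i \sum_j (f i (M i j) + g j (M i j)) =
  \sum_i \sum_k f i k *+ row_struct M i k + \sum_j \sum_k g j k *+ col_struct M j k :> R.
Proof.
under eq_bigr do rewrite big_split.
rewrite big_split /= [X in _ + X]exchange_big /=.
by congr (_ + _); apply: eq_bigr => ? _; rewrite sum_by_value.
Qed.

Lemma weak_lonesum_of_potential q m n (M : 'M['I_q]_(m, n))
    (f : 'I_m -> 'I_q -> R) (g : 'I_n -> 'I_q -> R) :
  (forall i j k, k != M i j -> f i k + g j k < f i (M i j) + g j (M i j)) ->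
  weak_lonesum M.
Proof.
move=> Mmax N rowN colN.
pose w (X : 'M['I_q]_(m, n)) i j := f i (X i j) + g j (X i j).
have slack_sum : \sum_i \sum_j (w M i j - w N i j) = 0.
  rewrite (eq_bigr (fun i => \sum_j w M i j - \sum_j w N i j)); last first.
    by move=> i _; rewrite sumrB.
  apply/eqP; rewrite sumrB !weight_by_struct subr_eq0; apply/eqP.
  by congr (_ + _); apply: eq_bigr => ? _; apply: eq_bigr => ? _; rewrite ?rowN ?colN.
have slack_ge0 i j : 0 <= w M i j - w N i j.
  by rewrite subr_ge0 /w; case: (eqVneq (N i j) (M i j)) => [->|/Mmax/ltW].
apply/matrixP => i j; apply/eqP; apply: contraT => /Mmax; rewrite -/(w N i j) -/(w M i j).
have row_slack0 :=
  @psumr_eq0P _ _ _ _ (fun i _ => sumr_ge0 _ (fun j _ => slack_ge0 i j)) slack_sum i isT.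
have /eqP := @psumr_eq0P _ _ _ _ (fun j _ => slack_ge0 i j) row_slack0 j isT.
by rewrite subr_eq0 => /eqP ->; rewrite ltxx.
Qed.

Lemma weak_lonesum_submatrix_of_potential q m n (M : 'M['I_q]_(m, n))
    (Rs : {set 'I_m}) (Cs : {set 'I_n})
    (f : 'I_m -> 'I_q -> R) (g : 'I_n -> 'I_q -> R) :
  (forall i j k, i \in Rs -> j \in Cs -> k != M i j ->
     f i k + g j k < f i (M i j) + g j (M i j)) ->
  weak_lonesum (submatrix M Rs Cs).
Proof.
move=> Mmax; apply: (weak_lonesum_of_potential (f := f \o enum_val) (g := g \o enum_val)).
by move=> i j k; rewrite mxE; apply: Mmax; apply: enum_valP.
Qed.

End Potential.

Section SymbolSwap.

Variables (q m n : nat) (M : 'M['I_q]_(m, n)).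

Lemma row_struct_map_perm (s : {perm 'I_q}) i k :
  row_struct (map_mx s M) i k = row_struct M i ((s^-1)%g k).
Proof.
by apply: eq_card => j; rewrite !inE mxE; apply/eqP/eqP => [<-|->]; rewrite ?permK ?permKV.
Qed.

Lemma col_struct_map_perm (s : {perm 'I_q}) j k :
  col_struct (map_mx s M) j k = col_struct M j ((s^-1)%g k).
Proof.
by apply: eq_card => i; rewrite !inE mxE; apply/eqP/eqP => [<-|->]; rewrite ?permK ?permKV.
Qed.

Lemma not_weak_lonesum_of_balanced_pair (a b : 'I_q) i0 j0 :
  M i0 j0 = a -> a != b ->
  (forall i, row_struct M i a = row_struct M i b) ->
  (forall j, col_struct M j a = col_struct M j b) ->
  ~ weak_lonesum M.
Proof.
move=> Ma neq_ab row_ab col_ab lonesum.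
have /matrixP/(_ i0 j0) : map_mx (tperm a b) M = M.
  apply: lonesum => [i k|j k]; rewrite (row_struct_map_perm, col_struct_map_perm) tpermV;
    by case: tpermP => [->|->|]; rewrite ?row_ab ?col_ab.
by rewrite mxE Ma tpermL => /eqP; rewrite eq_sym (negbTE neq_ab).
Qed.

End SymbolSwap.

Lemma succn_modn (i n : nat) :
  (i < n)%N -> (i.+1 %% n = if i.+1 == n then 0 else i.+1)%N.
Proof. by case: eqP => [->|/eqP ne lt_in]; rewrite ?modnn // modn_small // ltn_neqAle ne. Qed.

(* Indices are ranked in the cyclic order starting at r + 1.  Once the cell
   (r, r+1 mod n) is removed, the 1-entries are exactly the cells whose ranks
   differ by one, which is what the weights of symbol 1 reward; alpha separates
   the symbols 2 and 3 according to the side of r, and beta confines the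
   symbol 4 to column 0 and to the rows other than 0 and n-1. *)
Definition cyc_rank (n r i : nat) : int := (i + (if (i <= r)%N then n else 0))%N.

Definition row_weight (n r i k : nat) : int :=
  let a := cyc_rank n r i in
  let alpha := 4 * n%:Z + 1 in
  let beta := 300 * n%:Z + 300 in
  let early : int := if (i <= r)%N then 1 else 0 in
  match k with
  | 0%N => 0
  | 1%N => - 2 * a - 1
  | 2%N => 2 * a - 1 - alpha * early
  | 3%N => - 4 * a - 4 + alpha * early
  | _ => - beta * ((if i == 0 then 1 else 0) + (if i == n.-1 then 1 else 0))
  end.

Definition col_weight (n r j k : nat) : int :=
  let b := cyc_rank n r j in
  let alpha := 4 * n%:Z + 1 in
  let beta := 100 * n%:Z + 100 in
  let early : int := if (j <= r)%N then 1 else 0 in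
  match k with
  | 0%N => 0
  | 1%N => 2 * b
  | 2%N => - 2 * b + alpha * early - 8 * n%:Z * (if j == 0 then 1 else 0)
  | 3%N => 4 * b - alpha * early
  | _ => if j == 0 then beta else - beta
  end.

Lemma Mentry_weight_max (n r i j k : nat) :
  (3 <= n)%N -> (r < n)%N -> (i < n)%N -> (j < n)%N ->
  ~ (i = r /\ j = r.+1 %% n)%N -> (k < 5)%N -> k <> Mentry n i j ->
  row_weight n r i k + col_weight n r j k <
  row_weight n r i (Mentry n i j) + col_weight n r j (Mentry n i j).
Proof.
move=> n_ge3 lt_rn lt_in lt_jn; rewrite succn_modn //.
rewrite /Mentry /row_weight /col_weight /cyc_rank.
destruct k as [|[|[|[|[|k]]]]] => //; repeat case: ifP => ?; lia.
Qed.

Section CyclicMatrix.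

Variable n : nat.

Lemma Mn_val (i j : 'I_n) : val (Mn n i j) = Mentry n i j.
Proof. by rewrite mxE; apply: inordK; rewrite /Mentry; repeat case: ifP. Qed.

Lemma Mn_eq0 (i j : 'I_n) : (Mn n i j == 0) = (j == i).
Proof.
have lt_i := ltn_ord i; have lt_j := ltn_ord j.
rewrite -val_eqE -[j == i]val_eqE /= Mn_val /Mentry.
by apply/eqP/eqP; repeat case: ifP; lia.
Qed.

Lemma Mn_eq1 (i j : 'I_n) : (1 < n)%N -> (Mn n i j == 1) = (j == ordS i).
Proof.
move=> n_gt1; have lt_i := ltn_ord i; have lt_j := ltn_ord j.
rewrite -val_eqE -[j == _]val_eqE /= Mn_val /Mentry (succn_modn lt_i).
by apply/eqP/eqP; repeat case: ifP; lia.
Qed.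

Lemma Mn_row_struct01 (i : 'I_n) :
  (1 < n)%N -> row_struct (Mn n) i 0 = row_struct (Mn n) i 1.
Proof.
move=> n_gt1; rewrite /row_struct.
have -> : [set j | Mn n i j == 0] = [set i] by apply/setP => j; rewrite !inE Mn_eq0.
have -> : [set j | Mn n i j == 1] = [set ordS i] by apply/setP => j; rewrite !inE Mn_eq1.
by rewrite !cards1.
Qed.

Lemma Mn_col_struct01 (j : 'I_n) :
  (1 < n)%N -> col_struct (Mn n) j 0 = col_struct (Mn n) j 1.
Proof.
move=> n_gt1; rewrite /col_struct.
have -> : [set i | Mn n i j == 0] = [set j] by apply/setP => i; rewrite !inE Mn_eq0 eq_sym.
have -> : [set i | Mn n i j == 1] = [set ord_pred j].
  by apply/setP => i; rewrite !inE Mn_eq1 //; apply/eqP/eqP => ->; rewrite ?ordSK ?ord_predK.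
by rewrite !cards1.
Qed.

Lemma Mn_not_weak_lonesum : (1 < n)%N -> ~ weak_lonesum (Mn n).
Proof.
move=> n_gt1; pose i0 : 'I_n := Ordinal (ltnW n_gt1).
apply: (@not_weak_lonesum_of_balanced_pair _ _ _ _ 0 1 i0 i0) => //.
- by apply/eqP; rewrite Mn_eq0.
- by move=> i; apply: Mn_row_struct01.
- by move=> j; apply: Mn_col_struct01.
Qed.

Lemma proper_submatrix_avoids_cycle_cell (Rs Cs : {set 'I_n}) :
  (Rs != setT) || (Cs != setT) ->
  exists r : 'I_n, forall i j, i \in Rs -> j \in Cs -> ~ (i = r /\ j = ordS r).
Proof.
case/orP; rewrite -properT => /properP [_ [x _ x_notin]].
- by exists x => i j iR _ [eq_ix _]; move: x_notin; rewrite -eq_ix iR.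
- exists (ord_pred x) => i j _ jC [_]; rewrite ord_predK => eq_jx.
  by move: x_notin; rewrite -eq_jx jC.
Qed.

Lemma Mn_weight_max (r i j : 'I_n) (k : 'I_5) :
  (3 <= n)%N -> ~ (i = r /\ j = ordS r) -> k != Mn n i j ->
  row_weight n r i k + col_weight n r j k <
  row_weight n r i (Mn n i j) + col_weight n r j (Mn n i j).
Proof.
move=> n_ge3 avoid neq_k; rewrite Mn_val; apply: Mentry_weight_max => //.
- by move=> [eq_ir eq_jr]; apply: avoid; split; apply: val_inj.
- by apply/eqP; rewrite -Mn_val val_eqE.
Qed.

End CyclicMatrix.

Local Close Scope ring_scope.

Theorem proposition3p8 (n : nat) (hn : 3 <= n) :
  ~ weak_lonesum (Mn n) /\
  (forall (R C : {set 'I_n}), (R != setT) || (C != setT) ->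
     weak_lonesum (submatrix (Mn n) R C)).
Proof.
split; first exact: Mn_not_weak_lonesum (ltnW hn).
move=> R C /proper_submatrix_avoids_cycle_cell [r avoid].
apply: (weak_lonesum_submatrix_of_potential
          (f := fun i (k : 'I_5) => row_weight n r i k) (g := fun j k => col_weight n r j k)).
by move=> i j k iR jC; apply: Mn_weight_max hn (avoid i j iR jC).
Qed.
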